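(* Let $G=(V,E)$ be a simple cubic bipartite graph that has no potential 4-cycles, let $F_1$ be a 2-factor of $G$ all of whose cycles are chordless, and let $F_2$ be a 2-factor that is locally optimal with respect to $F_1$. Then for every cycle $C$ of $(V,F_1)$ there exists a cycle $D$ of $(V,F_2)$ with $|V(D)|\ge 10$ and $|V(C)\cap V(D)|\ge 4$.
   Context: A 2-factor of a graph $G=(V,E)$ is a set $F\subseteq E$ such that every node is incident to exactly two edges of $F$; the components of $(V,F)$ are simple cycles; for a cycle $C$, $V(C)$ and $E(C)$ denote its node and edge sets. A set $S$ of 4 nodes is a potential 4-cycle if some 2-factor of $G$ has a cycle with node set exactly $S$. For a 2-factor $F_1$, an edge $\{x,y\}$ is a chord of a cycle $C$ of $(V,F_1)$ if $x,y\in V(C)$ and $\{x,y\}\in E\setminus F_1$; $C$ is chordless if it has no chord. A 2-factor $F_2$ is locally optimal with respect to $F_1$ if $E\setminus F_1\subseteq F_2$ and for each cycle $C$ of $(V,F_1)$, the number of components of $(V,F_2\triangle E(C))$ is not smaller than the number of components of $(V,F_2)$ ($\triangle$ is symmetric difference). A graph is cubic if every node has degree exactly 3. *)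

(* A graph G=(V,E) is a finType T of nodes with a symmetric,
   irreflexive relation e. Edges are 2-element node sets {x,y}. *)
From mathcomp Require Import all_boot.
Set Implicit Arguments. Unset Strict Implicit. Unset Printing Implicit Defensive.

Section Graphs.
Variable T : finType.

Definition simple_graph (e : rel T) : Prop :=
  irreflexive e /\ symmetric e.

Definition edges (e : rel T) : {set {set T}} :=
  [set [set x; y] | x in T, y in T & e x y].

Definition cubic (e : rel T) : Prop :=
  forall x : T, #|[set y | e x y]| = 3.

Definition bipartite (e : rel T) : Prop :=
  exists c : T -> bool, forall x y, e x y -> c x != c y.

Definition adjF (F : {set {set T}}) : rel T := fun x y => [set x; y] \in F.

Definition comp (F : {set {set T}}) (x : T) : {set T} :=
  [set y | connect (adjF F) x y].

Definition ncomp (F : {set {set T}}) : nat := #|[set comp F x | x : T]|.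

(* C is (the node set of) a component / cycle of (V,F) *)
Definition is_cycle_of (F : {set {set T}}) (C : {set T}) : Prop :=
  exists x, C = comp F x.

Definition cycle_edges (F : {set {set T}}) (C : {set T}) : {set {set T}} :=
  [set f in F | f \subset C].

Definition two_factor (e : rel T) (F : {set {set T}}) : Prop :=
  F \subset edges e /\ forall x : T, #|[set f in F | x \in f]| = 2.

Definition potential_4cycle (e : rel T) (S : {set T}) : Prop :=
  #|S| = 4 /\ exists F, two_factor e F /\ is_cycle_of F S.

Definition chordless (e : rel T) (F : {set {set T}}) (C : {set T}) : Prop :=
  forall x y, x \in C -> y \in C -> [set x; y] \in edges e -> [set x; y] \in F.

Definition locally_optimal (e : rel T) (F1 F2 : {set {set T}}) : Prop :=
  edges e :\: F1 \subset F2 /\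
  forall C, is_cycle_of F1 C ->
    ncomp ((F2 :\: cycle_edges F1 C) :|: (cycle_edges F1 C :\: F2)) >= ncomp F2.

End Graphs.

(* Since G is cubic, E minus F1 is a perfect matching mu, contained in F2; thus
   F2 = mu + nu and F1 = nu + beta for involutions nu, beta, and switching F2 on a
   cycle C of F1 gives F2' = mu + nu', where nu' is beta on C and nu elsewhere.
   Fix a 2-colouring.  The cycles of F2 (resp. F2') correspond to the cycles of
   sigma = mu o nu (resp. sigma' = mu o nu') on white nodes, and on white nodes
   sigma' = sigma o rho, where rho is nu o beta on the white nodes C_w of C, a
   single cycle, and fixes the other nodes.  Comparing signs, c + c' + |C_w| is odd,
   where c and c' count these cycles.
   Suppose no cycle D of F2 has |D| >= 10 and |C /\ D| >= 4.  A sigma-cycle meeting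
   C twice then has length at most 4, and since sigma maps C out of C it meets C_w
   at most twice.  A sigma'-cycle through x in C_w meets C_w again: sigma' x is
   sigma (rho x), so either the sigma-cycle of rho x meets C only at rho x and
   sigma' follows it back to rho x, or sigma'^2 x is its next node in C, which is
   not x since a 2-cycle of sigma' would be a 4-cycle of the 2-factor F2'.  Cycles
   avoiding C are common to sigma and sigma', so 2 (c' - k) <= |C_w| <= 2 (c - k)
   for their number k; hence c' <= c, and equality would make c + c' + |C_w| even.
   So c' < c, against local optimality. *)

From Pilot Require Import Defs.
From mathcomp Require Import all_boot fingroup perm zify.
Set Implicit Arguments. Unset Strict Implicit. Unset Printing Implicit Defensive.

Lemma card_le_imset_fibres (T aT : finType) (f : T -> aT) (A : {set T}) k :
  {in A, forall x, #|[set y in A | f y == f x]| <= k} -> #|A| <= k * #|f @: A|.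
Proof.
move=> fibA; rewrite -[#|A|]sum1_card (partition_big_imset f) /= mulnC -sum_nat_const.
apply: leq_sum => _ /imsetP[x xA ->]; rewrite sum1dep_card; exact: fibA.
Qed.

Lemma card_ge_imset_fibres (T aT : finType) (f : T -> aT) (A : {set T}) k :
  {in A, forall x, k <= #|[set y in A | f y == f x]|} -> k * #|f @: A| <= #|A|.
Proof.
move=> fibA; rewrite -[#|A|]sum1_card (partition_big_imset f) /= mulnC -sum_nat_const.
apply: leq_sum => _ /imsetP[x xA ->]; rewrite sum1dep_card; exact: fibA.
Qed.

Section Partner.
Variables (T : finType) (r : rel T).
Hypotheses (r_sym : symmetric r) (r_card1 : forall x, #|[set y | r x y]| = 1).

Definition partner_fun x := odflt x [pick y | r x y].

Lemma partner_funP x y : r x y = (y == partner_fun x).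
Proof.
have /eqP/cards1P[z rxE] := r_card1 x.
have rx w : r x w = (w == z) by rewrite -in_set1 -rxE inE.
by rewrite /partner_fun; case: pickP => [w|/(_ z)]; rewrite !rx ?eqxx // => /eqP->.
Qed.

Lemma partner_funK : involutive partner_fun.
Proof. by move=> x; apply/eqP; rewrite eq_sym -partner_funP r_sym partner_funP. Qed.

Definition partner := perm (can_inj partner_funK).

Lemma partnerP x y : r x y = (y == partner x).
Proof. by rewrite permE partner_funP. Qed.

Lemma partnerK : involutive partner.
Proof. by move=> x; rewrite !permE partner_funK. Qed.
End Partner.

Section PermOrbits.
Variable T : finType.
Implicit Types (s t : {perm T}) (A P : {set T}).

Lemma porbit_subset s P x :
  (forall y, (s y \in P) = (y \in P)) -> x \in P -> porbit s x \subset P.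
Proof.
move=> sP xP; apply/subsetP => y /porbitP[i ->]; rewrite permX.
by elim: i => //= i; rewrite sP.
Qed.

Lemma porbit_perm1 s x : porbit s (s x) = porbit s x.
Proof. by have := porbit_perm s 1 x; rewrite expg1. Qed.

Lemma porbit_pair s x : s (s x) = x -> porbit s x = [set x; s x].
Proof.
move=> ssx; apply/setP => y; rewrite !inE; apply/porbitP/idP => [[i ->]|].
  rewrite permX; elim: i => [|i]; rewrite /= ?eqxx //.
  by case/orP => /eqP ->; rewrite ?ssx eqxx ?orbT.
by case/orP => /eqP ->; [exists 0; rewrite expg0 perm1 | exists 1; rewrite expg1].
Qed.

Lemma porbits_in_porbit s x : [set porbit s y | y in porbit s x] = [set porbit s x].
Proof.
apply/setP => O; rewrite inE; apply/imsetP/eqP => [[y xy ->]|->].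
  by apply/eqP; rewrite eq_porbit_mem.
by exists x; rewrite ?porbit_id.
Qed.

Lemma porbit_agree s t A x :
  (forall y, y \notin A -> t y = s y) -> [disjoint porbit s x & A] ->
  porbit t x = porbit s x.
Proof.
move=> tsA xA; have iter_ts i : iter i t x = iter i s x.
  elim: i => //= i ->; apply: tsA.
  by rewrite (disjointFr xA) // -permX mem_porbit.
by apply/setP => y; apply/porbitP/porbitP => -[i ->]; exists i; rewrite !permX.
Qed.

(* [t] follows [s] from [x] until the first visit to [A]. *)
Lemma mem_porbit_agree_until s t A x w :
  (forall y, y \notin A -> t y = s y) ->
  (forall y, y \in porbit s x -> y \in A -> y = w) ->
  w \in porbit s x -> w \in porbit t x.
Proof.
move=> tsA sxA /porbitP[n wE].
have trace m : iter m t x = iter m s x \/ w \in porbit t x.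
  elim: m => [|m [IH|]]; [by left | | by right].
  have [mA|mA] := boolP (iter m s x \in A); last by left; rewrite /= IH tsA.
  right; have <- : iter m s x = w by apply: sxA; rewrite // -permX mem_porbit.
  by rewrite -IH -permX mem_porbit.
by case: (trace n) => //; rewrite wE !permX => <-; rewrite -permX mem_porbit.
Qed.

Lemma card_porbits_split s P A : (forall y, (s y \in P) = (y \in P)) ->
  #|[set porbit s x | x in P]| = #|[set porbit s x | x in A :&: P]| +
     #|[set porbit s x | x in [set x in P | [disjoint porbit s x & A]]]|.
Proof.
move=> sP; rewrite -cardsUI; set meet := [set _ | _ in A :&: P].
set avoid := [set _ | _ in [set _ in P | _]].
have -> : meet :&: avoid = set0.
  apply/setP => O; rewrite !inE; apply/negP => /andP[/imsetP[x xAP ->] /imsetP[y]].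
  rewrite !inE => /andP[_ yA] xyE; rewrite -xyE in yA; case/setIP: xAP => xA _.
  by move: (disjointFr yA (porbit_id s x)); rewrite xA.
rewrite cards0 addn0; apply: eq_card => O; rewrite inE.
apply/imsetP/orP => [[x xP ->]|[]/imsetP[x]]; last 2 first.
- by case/setIP => *; exists x.
- by rewrite inE => /andP[xP _] ->; exists x.
have [xA|] := boolP [disjoint porbit s x & A].
  by right; apply/imsetP; exists x; rewrite // inE xP.
case/pred0Pn => y /andP[xy yA]; left; apply/imsetP; exists y.
  by rewrite inE [y \in A]yA (subsetP (porbit_subset sP xP)).
by apply/esym/eqP; rewrite eq_porbit_mem.
Qed.

End PermOrbits.

Section InducedPerm.
Variables (T : finType) (s : {perm T}) (P : {set T}).
Hypothesis sP : forall x, (s x \in P) = (x \in P).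

Definition induced_fun x := if x \in P then s x else x.

Lemma induced_fun_inj : injective induced_fun.
Proof.
move=> x y; rewrite /induced_fun.
case: ifP => xP; case: ifP => yP // xyE; first exact: perm_inj xyE.
- by move: yP; rewrite -xyE sP xP.
- by move: xP; rewrite xyE sP yP.
Qed.

Definition induced_perm := perm induced_fun_inj.

Lemma induced_permE x : induced_perm x = if x \in P then s x else x.
Proof. by rewrite permE. Qed.

Lemma porbit_induced_perm x :
  porbit induced_perm x = if x \in P then porbit s x else [set x].
Proof.
have iterE i : iter i induced_perm x = if x \in P then iter i s x else x.
  elim: i => [|i /= ->]; first by case: ifP.
  case: ifP => xP; rewrite induced_permE ?xP //.
  by rewrite -permX (subsetP (porbit_subset sP xP)) ?mem_porbit.
apply/setP => y; apply/porbitP/idP => [[i ->]|].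
  by rewrite permX iterE; case: ifP => _; rewrite ?set11 // -permX mem_porbit.
case: ifP => xP; last by rewrite inE => /eqP->; exists 0; rewrite expg0 perm1.
by case/porbitP => i ->; exists i; rewrite !permX iterE xP.
Qed.

Lemma odd_induced_perm :
  odd_perm induced_perm = odd #|P| (+) odd #|[set porbit s x | x in P]|.
Proof.
rewrite /odd_perm.
have -> : porbits induced_perm = [set porbit s x | x in P] :|: [set [set x] | x in ~: P].
  apply/setP => O; apply/imsetP/setUP => [[x _ ->]|[]/imsetP[x xP ->]].
  - rewrite porbit_induced_perm; case: ifP => xP; [left|right]; apply/imsetP.
      by exists x.
    by exists x; rewrite ?inE ?xP.
  - by exists x; rewrite // porbit_induced_perm xP.
  - by exists x; rewrite // porbit_induced_perm; rewrite inE in xP; rewrite (negbTE xP).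
rewrite -(cardsC P) cardsU [in X in _ + X - _]card_in_imset; last first.
  by move=> x y _ _; apply: set1_inj.
have -> : [set porbit s x | x in P] :&: [set [set x] | x in ~: P] = set0.
  apply/setP => O; rewrite !inE; apply/negP => /andP[/imsetP[x xP ->] /imsetP[y]].
  rewrite inE => yP xyE; have : y \in porbit s x by rewrite xyE set11.
  by move/(subsetP (porbit_subset sP xP)); apply/negP.
by rewrite cards0 subn0 !oddD addbACA addbb addbF.
Qed.
End InducedPerm.

Section Adjacency.
Variable T : finType.
Implicit Types (F : {set {set T}}) (x y z : T).

Lemma adjFC F : symmetric (adjF F).
Proof. by move=> x y; rewrite /adjF setUC. Qed.

Lemma mem_comp_adjF F z x y : adjF F x y -> (y \in Defs.comp F z) = (x \in Defs.comp F z).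
Proof.
move=> xy; rewrite !inE; apply/idP/idP => zc; apply: connect_trans zc _.
  by apply: connect1; rewrite adjFC.
exact: connect1.
Qed.

Variable e : rel T.
Hypotheses (e_irr : irreflexive e) (e_sym : symmetric e).

Lemma mem_edges x y : ([set x; y] \in edges e) = e x y.
Proof.
apply/imset2P/idP => [[a b _]|exy]; last by exists x y; rewrite ?inE.
rewrite inE => eab xyE.
have ab_xy : [set a; b] \subset [set x; y] by rewrite xyE.
move: (subsetP ab_xy a (set21 a b)) (subsetP ab_xy b (set22 a b)) eab.
by case/set2P=> -> /set2P[]->; rewrite ?e_irr // e_sym.
Qed.

Variable F : {set {set T}}.
Hypothesis F_edges : F \subset edges e.

Lemma adjF_edge x y : adjF F x y -> e x y.
Proof. by rewrite -mem_edges; apply: (subsetP F_edges). Qed.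

Lemma card_adjF x : #|[set f in F | x \in f]| = #|[set y | adjF F x y]|.
Proof.
have -> : [set f in F | x \in f] = [set [set x; y] | y in [set y | adjF F x y]].
  apply/setP => f; rewrite inE; apply/andP/imsetP => [[fF xf]|[y xy ->]].
    have /imset2P[a b _ _ fE] := subsetP F_edges _ fF; rewrite {}fE in fF xf *.
    case/set2P: xf fF => <- fF; first by exists b; rewrite ?inE.
    by exists a; rewrite ?inE /adjF setUC.
  by rewrite inE in xy; rewrite set21.
apply: card_in_imset => y z; rewrite !inE => xy xz yzE.
have /set2P[xz'|//] : z \in [set x; y] by rewrite yzE set22.
by move: (adjF_edge xz); rewrite -xz' e_irr.
Qed.
End Adjacency.

Lemma two_factor_card_adjF (T : finType) (e : rel T) F x :
  irreflexive e -> symmetric e -> two_factor e F -> #|[set y | adjF F x y]| = 2.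
Proof. by move=> e_irr e_sym [F_edges degF]; rewrite -(card_adjF e_irr e_sym F_edges). Qed.

(* A 2-regular graph whose edges are [x -- a x] and [x -- b x] for two colour-swapping
   involutions: each component is the union of a cycle of [s := b * a] (that is
   [x |-> a (b x)]) and its mirror image under [b], one in each colour class. *)
Section TwoInvolutions.
Variables (T : finType) (a b : {perm T}) (col : T -> bool) (F : {set {set T}}).
Hypotheses (aK : involutive a) (bK : involutive b).
Hypotheses (a_col : forall x, col (a x) = ~~ col x) (b_col : forall x, col (b x) = ~~ col x).
Hypothesis adjFE : forall x y, adjF F x y = (y == a x) || (y == b x).

Local Notation s := (b * a)%g.
Local Notation white := [set y | ~~ col y].

Lemma porbit_col x y : y \in porbit s x -> col y = col x.
Proof.
case/porbitP => i ->; rewrite permX.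
by elim: i => //= i <-; rewrite permM a_col b_col negbK.
Qed.

Lemma mem_porbit_b x y : y \in porbit s x -> b y \in porbit s (b x).
Proof.
case/porbitP => i ->; rewrite permX; elim: i => [|i IH] /=; first exact: porbit_id.
set w := iter i s x in IH *.
have sbsw : s (b (s w)) = b w by rewrite !permM bK aK.
by rewrite -eq_porbit_mem -[porbit s (b (s w))]porbit_perm1 sbsw eq_porbit_mem.
Qed.

Lemma comp_porbitU x : Defs.comp F x = porbit s x :|: porbit s (b x).
Proof.
have orbits_adj y z : adjF F y z ->
    porbit s z :|: porbit s (b z) = porbit s y :|: porbit s (b y).
  rewrite adjFE => /orP[]/eqP->; last by rewrite bK setUC.
  have -> : porbit s (a y) = porbit s (b y) by rewrite -[RHS]porbit_perm1 permM bK.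
  by rewrite -[porbit s (b (a y))]porbit_perm1 permM bK aK setUC.
apply/setP => y; rewrite inE; apply/idP/idP.
  case/connectP => p + ->; elim: p x => [|z p IH] x /=; first by rewrite inE porbit_id.
  by case/andP => /orbits_adj <- /IH.
have connect_s z : connect (adjF F) z (s z).
  apply: (@connect_trans _ _ (b z)); apply: connect1;
  by rewrite adjFE ?permM eqxx ?orbT.
have connect_porbit z w : w \in porbit s z -> connect (adjF F) z w.
  case/porbitP => i ->; rewrite permX; elim: i => [|i IH] /=; first exact: connect0.
  exact: connect_trans IH (connect_s _).
case/setUP; first exact: connect_porbit.
move/connect_porbit; apply: connect_trans; apply: connect1.
by rewrite adjFE eqxx orbT.
Qed.

Lemma comp_b x : Defs.comp F (b x) = Defs.comp F x.
Proof. by rewrite !comp_porbitU bK setUC. Qed.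

Lemma disjoint_porbit_b x : [disjoint porbit s x & porbit s (b x)].
Proof.
apply/pred0P => y /=; apply/negbTE/negP => /andP[/porbit_col + /porbit_col].
by rewrite b_col => ->; case: (col x).
Qed.

Lemma card_porbit_b x : #|porbit s (b x)| = #|porbit s x|.
Proof.
suff le_b y : #|porbit s y| <= #|porbit s (b y)|.
  by apply/eqP; rewrite eqn_leq le_b andbT; have := le_b (b x); rewrite bK.
rewrite -(card_imset _ (@perm_inj _ b)); apply: subset_leq_card.
by apply/subsetP => _ /imsetP[z yz ->]; apply: mem_porbit_b.
Qed.

Lemma card_comp x : #|Defs.comp F x| = 2 * #|porbit s x|.
Proof.
by rewrite comp_porbitU cardsU (disjoint_setI0 (disjoint_porbit_b x)) cards0 subn0
  card_porbit_b addnn mul2n.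
Qed.

Lemma card_setI_comp (A : {set T}) x : (forall y, (b y \in A) = (y \in A)) ->
  2 * #|A :&: porbit s x| <= #|A :&: Defs.comp F x|.
Proof.
move=> bA; rewrite comp_porbitU setIUr cardsU setIACA setIid.
rewrite (disjoint_setI0 (disjoint_porbit_b x)) setI0 cards0 subn0 mul2n -addnn leq_add2l.
rewrite -(card_imset _ (@perm_inj _ b)); apply: subset_leq_card.
by apply/subsetP => _ /imsetP[y /setIP[yA yx] ->]; rewrite inE bA yA mem_porbit_b.
Qed.

Lemma comp_white x : ~~ col x -> Defs.comp F x :&: white = porbit s x.
Proof.
move=> wx; rewrite comp_porbitU setIUl.
have -> : porbit s (b x) :&: white = set0.
  apply/setP => y; rewrite !inE; apply/negbTE/negP => /andP[/porbit_col].
  by rewrite b_col => ->; rewrite wx.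
by rewrite setU0; apply/setIidPl/subsetP => y /porbit_col; rewrite inE => ->.
Qed.

Lemma ncomp_porbits : ncomp F = #|[set porbit s x | x in white]|.
Proof.
have compsE : [set Defs.comp F x | x : T] = [set Defs.comp F x | x in white].
  apply/setP => D; apply/imsetP/imsetP => -[x wx ->]; last by exists x.
  case cx : (col x); last by exists x; rewrite ?inE ?cx.
  by exists (b x); rewrite ?comp_b // inE b_col cx.
rewrite /ncomp compsE -(card_in_imset (f := fun D => D :&: white)); last first.
  move=> _ _ /imsetP[x wx ->] /imsetP[y wy ->]; rewrite !inE in wx wy.
  rewrite !comp_white // => xyE; rewrite !comp_porbitU xyE.
  by have /eqP-> : porbit s (b x) == porbit s (b y) by rewrite eq_porbit_mem
    mem_porbit_b // -xyE porbit_id.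
by rewrite -imset_comp (@eq_in_imset _ _ _ (porbit s)) // => x /[!inE] /comp_white.
Qed.
End TwoInvolutions.

Section LocallyOptimal.
Variables (T : finType) (e : rel T) (col : T -> bool) (F1 F2 : {set {set T}}).
Hypotheses (e_irr : irreflexive e) (e_sym : symmetric e) (e_cubic : cubic e).
Hypothesis e_col : forall x y, e x y -> col x != col y.
Hypotheses (F1_2f : two_factor e F1) (F2_2f : two_factor e F2).
Hypothesis F2_matching : edges e :\: F1 \subset F2.

Lemma col_edge x y : e x y -> col y = ~~ col x.
Proof. by move/e_col; case: (col x); case: (col y). Qed.

Lemma adjF1_edge x y : adjF F1 x y -> e x y.
Proof. exact: (adjF_edge e_irr e_sym (proj1 F1_2f)). Qed.

Lemma adjF2_edge x y : adjF F2 x y -> e x y.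
Proof. exact: (adjF_edge e_irr e_sym (proj1 F2_2f)). Qed.

Definition mu_rel x y := e x y && ~~ adjF F1 x y.

Lemma mu_rel_sym : symmetric mu_rel.
Proof. by move=> x y; rewrite /mu_rel e_sym adjFC. Qed.

Lemma mu_rel_card1 x : #|[set y | mu_rel x y]| = 1.
Proof.
have -> : [set y | mu_rel x y] = [set y | e x y] :\: [set y | adjF F1 x y].
  by apply/setP => y; rewrite !inE andbC.
rewrite cardsD (setIidPr _) ?e_cubic ?(two_factor_card_adjF _ e_irr e_sym F1_2f) //.
by apply/subsetP => y; rewrite !inE; apply: adjF1_edge.
Qed.

Definition mu := partner mu_rel_sym mu_rel_card1.

Lemma muP x y : (e x y && ~~ adjF F1 x y) = (y == mu x).
Proof. exact: (partnerP mu_rel_sym mu_rel_card1). Qed.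

Lemma muK : involutive mu. Proof. exact: partnerK. Qed.

Lemma mu_edge x : e x (mu x) && ~~ adjF F1 x (mu x).
Proof. by rewrite muP. Qed.

Lemma adjF2_mu x : adjF F2 x (mu x).
Proof.
apply: (subsetP F2_matching); rewrite inE mem_edges //.
by case/andP: (mu_edge x) => -> ->.
Qed.

Definition nu_rel x y := adjF F2 x y && (y != mu x).

Lemma nu_rel_sym : symmetric nu_rel.
Proof. by move=> x y; rewrite /nu_rel adjFC eq_sym (inv_eq muK). Qed.

Lemma nu_rel_card1 x : #|[set y | nu_rel x y]| = 1.
Proof.
have -> : [set y | nu_rel x y] = [set y | adjF F2 x y] :\ mu x.
  by apply/setP => y; rewrite !inE andbC.
have := cardsD1 (mu x) [set y | adjF F2 x y].
by rewrite (two_factor_card_adjF _ e_irr e_sym F2_2f) inE adjF2_mu => -[].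
Qed.

Definition nu := partner nu_rel_sym nu_rel_card1.

Lemma nuK : involutive nu. Proof. exact: partnerK. Qed.

Lemma adjF2E x y : adjF F2 x y = (y == mu x) || (y == nu x).
Proof.
have := partnerP nu_rel_sym nu_rel_card1 x y; rewrite /nu_rel -/nu.
by case: eqP => [->|_]; rewrite ?adjF2_mu ?andbT.
Qed.

Lemma nu_neq_mu x : nu x != mu x.
Proof. by have := partnerP nu_rel_sym nu_rel_card1 x (nu x); rewrite eqxx => /andP[]. Qed.

Lemma adjF1_nu x : adjF F1 x (nu x).
Proof.
apply: contraR (nu_neq_mu x) => nF1; rewrite -muP nF1 andbT adjF2_edge //.
by rewrite adjF2E eqxx orbT.
Qed.

Definition beta_rel x y := adjF F1 x y && (y != nu x).

Lemma beta_rel_sym : symmetric beta_rel.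
Proof. by move=> x y; rewrite /beta_rel adjFC eq_sym (inv_eq nuK). Qed.

Lemma beta_rel_card1 x : #|[set y | beta_rel x y]| = 1.
Proof.
have -> : [set y | beta_rel x y] = [set y | adjF F1 x y] :\ nu x.
  by apply/setP => y; rewrite !inE andbC.
have := cardsD1 (nu x) [set y | adjF F1 x y].
by rewrite (two_factor_card_adjF _ e_irr e_sym F1_2f) inE adjF1_nu => -[].
Qed.

Definition beta := partner beta_rel_sym beta_rel_card1.

Lemma betaK : involutive beta. Proof. exact: partnerK. Qed.

Lemma adjF1E x y : adjF F1 x y = (y == nu x) || (y == beta x).
Proof.
have := partnerP beta_rel_sym beta_rel_card1 x y; rewrite /beta_rel -/beta.
by case: eqP => [->|_]; rewrite ?adjF1_nu ?andbT.
Qed.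

Lemma beta_neq_nu x : beta x != nu x.
Proof.
by have := partnerP beta_rel_sym beta_rel_card1 x (beta x); rewrite eqxx => /andP[].
Qed.

Lemma mu_col x : col (mu x) = ~~ col x.
Proof. by case/andP: (mu_edge x) => /col_edge. Qed.

Lemma nu_col x : col (nu x) = ~~ col x.
Proof. exact/col_edge/adjF1_edge/adjF1_nu. Qed.

Lemma beta_col x : col (beta x) = ~~ col x.
Proof. by apply/col_edge/adjF1_edge; rewrite adjF1E eqxx orbT. Qed.

Variable C : {set T}.
Hypotheses (C_cycle : is_cycle_of F1 C) (C_chordless : chordless e F1 C).

Lemma mem_C_adjF1 x y : adjF F1 x y -> (y \in C) = (x \in C).
Proof. by case: C_cycle => x0 ->; apply: mem_comp_adjF. Qed.

Lemma nu_C x : (nu x \in C) = (x \in C).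
Proof. exact/mem_C_adjF1/adjF1_nu. Qed.

Lemma beta_C x : (beta x \in C) = (x \in C).
Proof. by apply: mem_C_adjF1; rewrite adjF1E eqxx orbT. Qed.

Lemma mu_notin_C x : x \in C -> mu x \notin C.
Proof.
move=> xC; apply/negP => muC; case/andP: (mu_edge x) => exmu /negP; apply.
by apply: C_chordless; rewrite ?mem_edges.
Qed.

Definition nu'_fun x := if x \in C then beta x else nu x.

Lemma nu'_funK : involutive nu'_fun.
Proof.
move=> x; rewrite /nu'_fun; case: (boolP (x \in C)) => xC.
  by rewrite beta_C xC betaK.
by rewrite nu_C (negbTE xC) nuK.
Qed.

Definition nu' := perm (can_inj nu'_funK).

Lemma nu'E x : nu' x = if x \in C then beta x else nu x.
Proof. by rewrite permE. Qed.

Lemma nu'K : involutive nu'.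
Proof. by move=> x; rewrite !permE nu'_funK. Qed.

Lemma nu'_col x : col (nu' x) = ~~ col x.
Proof. by rewrite nu'E; case: ifP; rewrite ?beta_col ?nu_col. Qed.

Definition F2' := (F2 :\: cycle_edges F1 C) :|: (cycle_edges F1 C :\: F2).

Lemma adjF2'E x y : adjF F2' x y = (y == mu x) || (y == nu' x).
Proof.
rewrite /adjF /F2' /cycle_edges !inE subUset !sub1set -!/(adjF _ x y) adjF1E adjF2E nu'E.
have [xC|xC] := boolP (x \in C); last by rewrite !andbF orbF.
have [->|y_mu] := eqVneq y (mu x); first by rewrite (negbTE (mu_notin_C xC)) !andbF.
have [->|y_nu] := eqVneq y (nu x); first by rewrite nu_C xC eq_sym (negbTE (beta_neq_nu x)).
by rewrite /= andbF; case: eqP => // ->; rewrite beta_C xC.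
Qed.

Lemma two_factor_F2' : two_factor e F2'.
Proof.
have F2'_edges : F2' \subset edges e.
  apply/subsetP => f; rewrite !inE => /orP[/andP[_ fF2]|/andP[_ /andP[fF1 _]]].
    exact: (subsetP (proj1 F2_2f)).
  exact: (subsetP (proj1 F1_2f)).
split => // x; rewrite (card_adjF e_irr e_sym F2'_edges).
have -> : [set y | adjF F2' x y] = [set mu x; nu' x] by apply/setP => y; rewrite !inE adjF2'E.
rewrite cards2; case: eqVneq => // mu_nu'.
case/andP: (mu_edge x) => _; rewrite mu_nu' adjF1E nu'E.
by case: ifP; rewrite eqxx ?orbT.
Qed.

Local Notation sigma := (nu * mu)%g.
Local Notation sigma' := (nu' * mu)%g.
Local Notation rho := (beta * nu)%g.
Local Notation white := [set y | ~~ col y].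
Local Notation CW := (C :&: white).

Lemma sigma_notin_C x : x \in C -> sigma x \notin C.
Proof. by move=> xC; rewrite permM mu_notin_C ?nu_C. Qed.

Lemma sigma'_notin_C x : x \notin C -> sigma' x = sigma x.
Proof. by move=> xC; rewrite !permM nu'E (negbTE xC). Qed.

Lemma sigma'_in_C x : x \in C -> sigma' x = sigma (rho x).
Proof. by move=> xC; rewrite !permM nuK nu'E xC. Qed.

Lemma sigma_white x : (sigma x \in white) = (x \in white).
Proof. by rewrite !inE permM mu_col nu_col negbK. Qed.

Lemma sigma'_white x : (sigma' x \in white) = (x \in white).
Proof. by rewrite !inE permM mu_col nu'_col negbK. Qed.

Hypothesis no_big_overlap :
  forall x, 10 <= #|Defs.comp F2 x| -> #|C :&: Defs.comp F2 x| < 4.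
Hypothesis no_potential_4cycle : forall S : {set T}, ~ potential_4cycle e S.

Lemma card_porbit_sigma_le4 x : 2 <= #|C :&: porbit sigma x| -> #|porbit sigma x| <= 4.
Proof.
move=> two_hits; rewrite leqNgt; apply/negP => long.
have := card_setI_comp muK nuK mu_col nu_col adjF2E x nu_C.
have := card_comp muK nuK mu_col nu_col adjF2E x.
by have := @no_big_overlap x; lia.
Qed.

(* [sigma] maps [C] out of [C], so two hits of a [sigma]-cycle of length at most 4 on [C]
   are two steps apart. *)
Lemma porbit_sigma_C_two_steps u y : u \in C -> y \in porbit sigma u -> y \in C -> y != u ->
  y = sigma (sigma u).
Proof.
move=> uC uy yC y_u.
have : #|[set u; y]| <= #|C :&: porbit sigma u|.
  by apply/subset_leq_card/subsetP => z /set2P[]->; rewrite inE ?uC ?porbit_id ?yC.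
rewrite cards2 eq_sym y_u => /card_porbit_sigma_le4 le4.
move: uy; rewrite porbit_traject => /trajectP[i lt_i yE]; rewrite {}yE in yC y_u *.
have i0 : i != 0 by apply: contraNneq y_u => ->.
have [i1|[->//|i_last]] : i = 1 \/ i = 2 \/ i.+1 = #|porbit sigma u| by lia.
  by rewrite i1 /= (negbTE (sigma_notin_C uC)) in yC.
by have := sigma_notin_C yC; rewrite -iterS i_last iter_porbit uC.
Qed.

Lemma sigma'_no_2cycle x : sigma' (sigma' x) = x -> sigma' x = x.
Proof.
move=> s2x; apply/eqP/negPn/negP => sx_x.
apply: (no_potential_4cycle (S := Defs.comp F2' x)); split; last first.
  by exists F2'; split; [exact: two_factor_F2' | exists x].
rewrite (card_comp muK nu'K mu_col nu'_col adjF2'E) porbit_pair // cards2.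
by rewrite eq_sym sx_x.
Qed.

Lemma porbit_sigma'_second_hit x : x \in CW ->
  exists2 y, y \in CW & (y != x) && (y \in porbit sigma' x).
Proof.
case/setIP => xC; rewrite inE => wx.
set u := rho x; have uE : u = nu (beta x) by rewrite /u permM.
have uC : u \in C by rewrite uE nu_C beta_C.
have wu : ~~ col u by rewrite uE nu_col beta_col negbK.
have u_x : u != x.
  by apply: contraNneq (beta_neq_nu x) => /(congr1 nu); rewrite uE nuK => ->.
have s'x : sigma' x = sigma u := sigma'_in_C xC.
have [y /andP[/andP[uy yC] y_u]|no_hit] :=
  pickP [pred y | (y \in porbit sigma u) && (y \in C) && (y != u)].
  have s'2x : sigma' (sigma' x) = y.
    by rewrite s'x sigma'_notin_C ?sigma_notin_C // -(porbit_sigma_C_two_steps uC uy yC y_u).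
  exists y; first by rewrite inE yC inE (porbit_col mu_col nu_col uy) wu.
  apply/andP; split; last by have := mem_porbit sigma' 2 x; rewrite permX /= s'2x.
  apply: contraTneq xC => yx; rewrite yx in s'2x.
  by rewrite -(sigma'_no_2cycle s'2x) s'x sigma_notin_C.
exists u; first by rewrite inE uC inE wu.
rewrite u_x -(porbit_perm1 sigma') s'x /=.
apply: (mem_porbit_agree_until (A := C)) => [z|z|]; first exact: sigma'_notin_C.
  rewrite porbit_perm1 => uz zC; apply/eqP; apply: contraFT (no_hit z) => z_u.
  by rewrite /= uz zC z_u.
by rewrite -eq_porbit_mem porbit_perm1.
Qed.

Lemma card_CW_le_porbits_sigma : #|CW| <= 2 * #|[set porbit sigma x | x in CW]|.
Proof.
apply: card_le_imset_fibres => x /setIP[xC _].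
apply: (@leq_trans #|[set x; sigma (sigma x)]|); last by rewrite cards2 ltnS leq_b1.
apply/subset_leq_card/subsetP => y; rewrite !inE => /andP[/andP[yC _]].
rewrite eq_porbit_mem => xy; have [//|y_x] := eqVneq y x.
by rewrite /= (porbit_sigma_C_two_steps xC xy yC y_x) eqxx.
Qed.

Lemma card_porbits_sigma'_le_CW : 2 * #|[set porbit sigma' x | x in CW]| <= #|CW|.
Proof.
apply: card_ge_imset_fibres => x xCW.
have [y yCW /andP[y_x xy]] := porbit_sigma'_second_hit xCW.
have <- : #|[set x; y]| = 2 by rewrite cards2 eq_sym y_x.
apply/subset_leq_card/subsetP => z.
by rewrite in_set2 in_set => /orP[]/eqP->; rewrite ?xCW ?yCW ?eqxx //= eq_porbit_mem.
Qed.

Lemma porbits_avoiding_C :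
  [set porbit sigma x | x in [set x in white | [disjoint porbit sigma x & C]]] =
  [set porbit sigma' x | x in [set x in white | [disjoint porbit sigma' x & C]]].
Proof.
have sigma_sigma' x : [disjoint porbit sigma x & C] -> porbit sigma' x = porbit sigma x.
  exact: porbit_agree sigma'_notin_C.
have sigma'_sigma x : [disjoint porbit sigma' x & C] -> porbit sigma x = porbit sigma' x.
  by apply: porbit_agree => y /sigma'_notin_C.
have avoidE : [set x in white | [disjoint porbit sigma x & C]] =
              [set x in white | [disjoint porbit sigma' x & C]].
  apply/setP => x; rewrite !inE; case: (~~ col x) => //=.
  by apply/idP/idP => avoid; [rewrite sigma_sigma' | rewrite sigma'_sigma].
rewrite avoidE; apply: eq_in_imset => x; rewrite inE => /andP[_].
exact: sigma'_sigma.
Qed.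

Lemma CW_porbit_rho : exists x, CW = porbit rho x.
Proof.
case: C_cycle => x0 ->; have compE := comp_white nuK betaK nu_col beta_col adjF1E.
case c0 : (col x0); last by exists x0; rewrite compE ?c0.
by exists (beta x0); rewrite -(comp_b nuK betaK adjF1E) compE ?beta_col ?c0.
Qed.

Lemma odd_porbits_sigma_sigma' :
  odd (#|[set porbit sigma' x | x in white]| + #|[set porbit sigma x | x in white]| + #|CW|).
Proof.
have rho_CW x : (rho x \in CW) = (x \in CW).
  by rewrite !inE permM nu_C beta_C nu_col beta_col negbK.
have sigma'E :
    induced_perm sigma'_white = (induced_perm rho_CW * induced_perm sigma_white)%g.
  apply/permP => x; rewrite permM !induced_permE !inE.
  case wx : (col x) => /=; first by rewrite andbF /= wx.
  rewrite andbT; have [xC|xC] := boolP (x \in C); last by rewrite wx sigma'_notin_C.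
  by rewrite sigma'_in_C // [rho x]permM nu_col beta_col negbK wx.
have [x0 CWE] := CW_porbit_rho.
have := odd_permM (induced_perm rho_CW) (induced_perm sigma_white).
rewrite -sigma'E !odd_induced_perm {2}CWE porbits_in_porbit cards1 !oddD.
set c' := odd #|_ sigma' @: _|; set c := odd #|_ sigma @: _|.
by move: (odd #|white|) (odd #|CW|) c' c => [] [] [] [].
Qed.

Lemma ncomp_F2'_lt : ncomp F2' < ncomp F2.
Proof.
rewrite (ncomp_porbits muK nuK mu_col nu_col adjF2E).
rewrite (ncomp_porbits muK nu'K mu_col nu'_col adjF2'E).
have := card_porbits_split C sigma_white; have := card_porbits_split C sigma'_white.
rewrite porbits_avoiding_C.
have := odd_porbits_sigma_sigma'; have := card_CW_le_porbits_sigma.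
have := card_porbits_sigma'_le_CW; lia.
Qed.
End LocallyOptimal.

Theorem lemma3 (T : finType) (e : rel T) (F1 F2 : {set {set T}}) :
  simple_graph e -> cubic e -> bipartite e ->
  (forall S : {set T}, ~ potential_4cycle e S) ->
  two_factor e F1 ->
  (forall C, is_cycle_of F1 C -> chordless e F1 C) ->
  two_factor e F2 ->
  locally_optimal e F1 F2 ->
  forall C, is_cycle_of F1 C ->
    exists D, is_cycle_of F2 D /\ 10 <= #|D| /\ 4 <= #|C :&: D|.
Proof.
move=> [e_irr e_sym] e_cubic [col e_col] no_4cycle F1_2f F1_chordless F2_2f.
move=> [F2_matching F2_opt] C C_cycle.
have [/existsP[x /andP[large overlap]]|] :=
  boolP [exists x, (10 <= #|Defs.comp F2 x|) && (4 <= #|C :&: Defs.comp F2 x|)].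
  by exists (Defs.comp F2 x); split; first exists x.
move/existsPn => small_overlap.
have no_big_overlap x : 10 <= #|Defs.comp F2 x| -> #|C :&: Defs.comp F2 x| < 4.
  by move=> large; apply: contraR (small_overlap x); rewrite -leqNgt large.
have := ncomp_F2'_lt e_irr e_sym e_cubic e_col F1_2f F2_2f F2_matching C_cycle
  (F1_chordless C C_cycle) no_big_overlap no_4cycle.
by rewrite ltnNge F2_opt.
Qed.
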